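(* Consider the chain pendulum on a cart described in the context, with configuration $(q_1,\dots,q_n,x)\in(\mathsf{S}^2)^n\times\mathbb{R}^2$, Lagrangian $L=T-V$, and a horizontal control force $u\in\mathbb{R}^2$ acting on the cart. The Euler–Lagrange equations of this system on $(\mathsf{S}^2)^n\times\mathbb{R}^2$ (obtained from the Lagrange–d'Alembert principle, with variations $\delta q_i=\xi_i\times q_i$, $\xi_i\cdot q_i=0$, and virtual work $u\cdot\delta x$) are \[ M_{00}\ddot x+\sum_{j=1}^n M_{0j}\ddot q_j=u, \] and, for each $i=1,\dots,n$, \[ -\hat q_i^2 M_{i0}\ddot x+M_{ii}\ddot q_i-\sum_{j\neq i}M_{ij}\hat q_i^2\ddot q_j=-\|\dot q_i\|^2M_{ii}q_i-\Big(\sum_{a=i}^n m_a\Big)g\,l_i\,\hat q_i^2e_3 . \] Equivalently, in terms of the angular velocities $\omega_i\in\mathbb{R}^3$ (with $\omega_i\cdot q_i=0$), they can be written as \[ M_{00}\ddot x-\sum_{j=1}^n M_{0j}\hat q_j\dot\omega_j=\sum_{j=1}^n M_{0j}\|\omega_j\|^2q_j+u, \] \[ \hat q_iM_{i0}\ddot x+M_{ii}\dot\omega_i-\sum_{j\neq i}M_{ij}\hat q_i\hat q_j\dot\omega_j=\sum_{j\neq i}M_{ij}\|\omega_j\|^2\hat q_iq_j+\Big(\sum_{a=i}^n m_a\Big)g\,l_i\,\hat q_ie_3,\quad i=1,\dots,n, \] \[ \dot q_i=\omega_i\times q_i,\quad i=1,\dots,n. \]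
   Context: Let $n\ge1$. $\mathsf{S}^2=\{q\in\mathbb{R}^3:\|q\|=1\}$. Let $e_1,e_2,e_3$ be the standard basis of $\mathbb{R}^3$, with $e_3$ the direction of gravity, $g>0$ the gravitational acceleration, and $C=[e_1,e_2]\in\mathbb{R}^{3\times2}$. For $y\in\mathbb{R}^3$, $\hat y$ denotes the $3\times3$ skew-symmetric matrix with $\hat y z=y\times z$ for all $z\in\mathbb{R}^3$. A cart of mass $m>0$ moves in a horizontal plane, with position $x\in\mathbb{R}^2$ (so its inertial position is $Cx$). A serial chain of $n$ massless links joined by spherical joints is attached to the cart; link $i$ has length $l_i>0$, unit direction vector $q_i\in\mathsf{S}^2$, and a point mass $m_i>0$ at its outboard end, whose position is $x_i=Cx+\sum_{a=1}^i l_aq_a$. The angular velocity $\omega_i\in\mathbb{R}^3$ of link $i$ satisfies $\dot q_i=\omega_i\times q_i$, $\omega_i\cdot q_i=0$. Define $M_{00}=m+\sum_{i=1}^n m_i\in\mathbb{R}$, $M_{0i}=\big(\sum_{a=i}^n m_a\big)l_i\,C^T\in\mathbb{R}^{2\times3}$, $M_{i0}=M_{0i}^T$, and $M_{ij}=\big(\sum_{a=\max\{i,j\}}^n m_a\big)l_il_j\in\mathbb{R}$ for $i,j=1,\dots,n$. The kinetic energy is $T=\tfrac12M_{00}\|\dot x\|^2+\dot x\cdot\sum_{i=1}^nM_{0i}\dot q_i+\tfrac12\sum_{i,j=1}^nM_{ij}\dot q_i\cdot\dot q_j$, the potential energy is $V=-\sum_{i=1}^n\big(\sum_{a=i}^n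 m_a\big)g\,l_i\,e_3\cdot q_i$, and $L=T-V$. A control force $u\in\mathbb{R}^2$ acts on the cart. *)

From Stdlib Require Import Reals Lra Lia.
From Coquelicot Require Import Coquelicot.
Open Scope R_scope.

Record V3 := mkV3 { c1 : R; c2 : R; c3 : R }.
Record V2 := mkV2 { d1 : R; d2 : R }.

Definition v3zero : V3 := mkV3 0 0 0.
Definition v3add (a b : V3) : V3 := mkV3 (c1 a + c1 b) (c2 a + c2 b) (c3 a + c3 b).
Definition v3opp (a : V3) : V3 := mkV3 (- c1 a) (- c2 a) (- c3 a).
Definition v3scal (k : R) (a : V3) : V3 := mkV3 (k * c1 a) (k * c2 a) (k * c3 a).
Definition v3dot (a b : V3) : R := c1 a * c1 b + c2 a * c2 b + c3 a * c3 b.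
Definition v3norm2 (a : V3) : R := v3dot a a.
Definition v3cross (a b : V3) : V3 :=
  mkV3 (c2 a * c3 b - c3 a * c2 b) (c3 a * c1 b - c1 a * c3 b) (c1 a * c2 b - c2 a * c1 b).
(** [hat y z] is the action of the skew matrix \hat y on z, i.e. y x z. *)
Definition hat (y z : V3) : V3 := v3cross y z.
Definition hat2 (y z : V3) : V3 := hat y (hat y z).
Definition e3 : V3 := mkV3 0 0 1.

Definition v2zero : V2 := mkV2 0 0.
Definition v2add (a b : V2) : V2 := mkV2 (d1 a + d1 b) (d2 a + d2 b).
Definition v2scal (k : R) (a : V2) : V2 := mkV2 (k * d1 a) (k * d2 a).
Definition v2dot (a b : V2) : R := d1 a * d1 b + d2 a * d2 b.

(** C = [e1, e2] : R^2 -> R^3 and its transpose C^T : R^3 -> R^2 *)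
Definition Cmat (x : V2) : V3 := mkV3 (d1 x) (d2 x) 0.
Definition CT (v : V3) : V2 := mkV2 (c1 v) (c2 v).

Fixpoint sumR (N : nat) (f : nat -> R) : R :=
  match N with O => 0 | S N' => sumR N' f + f N end.
Fixpoint sumV3 (N : nat) (f : nat -> V3) : V3 :=
  match N with O => v3zero | S N' => v3add (sumV3 N' f) (f N) end.
Fixpoint sumV2 (N : nat) (f : nat -> V2) : V2 :=
  match N with O => v2zero | S N' => v2add (sumV2 N' f) (f N) end.

Definition dV3 (f : R -> V3) (t : R) : V3 :=
  mkV3 (Derive (fun s => c1 (f s)) t) (Derive (fun s => c2 (f s)) t)
       (Derive (fun s => c3 (f s)) t).
Definition dV2 (f : R -> V2) (t : R) : V2 :=
  mkV2 (Derive (fun s => d1 (f s)) t) (Derive (fun s => d2 (f s)) t).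

Definition C1 (f : R -> R) : Prop :=
  (forall t, ex_derive f t) /\ (forall t, continuous (Derive f) t).
Definition C2 (f : R -> R) : Prop := C1 f /\ C1 (Derive f).

Definition C1_V3 (f : R -> V3) : Prop :=
  C1 (fun s => c1 (f s)) /\ C1 (fun s => c2 (f s)) /\ C1 (fun s => c3 (f s)).
Definition C2_V3 (f : R -> V3) : Prop :=
  C2 (fun s => c1 (f s)) /\ C2 (fun s => c2 (f s)) /\ C2 (fun s => c3 (f s)).
Definition C1_V2 (f : R -> V2) : Prop :=
  C1 (fun s => d1 (f s)) /\ C1 (fun s => d2 (f s)).
Definition C2_V2 (f : R -> V2) : Prop :=
  C2 (fun s => d1 (f s)) /\ C2 (fun s => d2 (f s)).
Definition cont_V2 (f : R -> V2) : Prop :=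
  (forall t, continuous (fun s => d1 (f s)) t) /\
  (forall t, continuous (fun s => d2 (f s)) t).

(** * Inertia terms.  Parameters: n links, cart mass m, point masses
    [mass i] and lengths [len i] (i = 1..n), gravity g. *)
Section Inertia.
Variables (n : nat) (m : R) (mass len : nat -> R) (g : R).

Definition Mbar (i : nat) : R :=
  sumR n (fun a => if (i <=? a)%nat then mass a else 0).
Definition M00 : R := m + sumR n mass.
Definition M0 (i : nat) (v : V3) : V2 := v2scal (Mbar i * len i) (CT v).
(** M_{i0} w = M_{0i}^T w = (\sum_{a=i}^n m_a) l_i C w *)
Definition Mi0 (i : nat) (w : V2) : V3 := v3scal (Mbar i * len i) (Cmat w).
Definition Mij (i j : nat) : R := Mbar (Nat.max i j) * len i * len j.

Definition Kin (xd : V2) (qd : nat -> V3) : R :=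
  / 2 * M00 * v2dot xd xd
  + v2dot xd (sumV2 n (fun i => M0 i (qd i)))
  + / 2 * sumR n (fun i => sumR n (fun j => Mij i j * v3dot (qd i) (qd j))).
Definition Pot (q : nat -> V3) : R :=
  - sumR n (fun i => Mbar i * g * len i * v3dot e3 (q i)).
Definition Lag (xd : V2) (q qd : nat -> V3) : R := Kin xd qd - Pot q.

(** Lagrange–d'Alembert principle along the trajectory (x, q) with control u:
    for every time interval [a,b] and every C^1 variation
    delta x, delta q_i = xi_i x q_i (xi_i . q_i = 0) vanishing at a and b,
    \int_a^b (delta L + u . delta x) dt = 0, where delta L is the first
    variation of L in the direction of the variation. *)
Definition LdA (x : R -> V2) (q : nat -> R -> V3) (u : R -> V2) : Prop :=
  forall a b : R, a < b ->
  forall (dx : R -> V2) (xi : nat -> R -> V3),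
    C1_V2 dx ->
    (forall i, (1 <= i <= n)%nat -> C1_V3 (xi i)) ->
    (forall i t, (1 <= i <= n)%nat -> v3dot (xi i t) (q i t) = 0) ->
    dx a = v2zero -> dx b = v2zero ->
    (forall i, (1 <= i <= n)%nat -> xi i a = v3zero /\ xi i b = v3zero) ->
    let dq := fun i t => v3cross (xi i t) (q i t) in
    RInt (fun t =>
       Derive (fun e =>
         Lag (v2add (dV2 x t) (v2scal e (dV2 dx t)))
             (fun i => v3add (q i t) (v3scal e (dq i t)))
             (fun i => v3add (dV3 (q i) t) (v3scal e (dV3 (dq i) t)))) 0
       + v2dot (u t) (dx t)) a b = 0.

Definition EL_q (x : R -> V2) (q : nat -> R -> V3) (u : R -> V2) : Prop :=
  forall t : R,
    v2add (v2scal M00 (dV2 (dV2 x) t))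
          (sumV2 n (fun j => M0 j (dV3 (dV3 (q j)) t))) = u t /\
    forall i, (1 <= i <= n)%nat ->
      v3add (v3add (v3opp (hat2 (q i t) (Mi0 i (dV2 (dV2 x) t))))
                   (v3scal (Mij i i) (dV3 (dV3 (q i)) t)))
            (v3opp (sumV3 n (fun j => if (j =? i)%nat then v3zero
                       else v3scal (Mij i j) (hat2 (q i t) (dV3 (dV3 (q j)) t)))))
      = v3add (v3scal (- (v3norm2 (dV3 (q i) t) * Mij i i)) (q i t))
              (v3scal (- (Mbar i * g * len i)) (hat2 (q i t) e3)).

Definition EL_omega (x : R -> V2) (q om : nat -> R -> V3) (u : R -> V2) : Prop :=
  forall t : R,
    v2add (v2scal M00 (dV2 (dV2 x) t))
          (v2scal (-1) (sumV2 n (fun j => M0 j (hat (q j t) (dV3 (om j) t)))))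
      = v2add (sumV2 n (fun j => M0 j (v3scal (v3norm2 (om j t)) (q j t)))) (u t) /\
    forall i, (1 <= i <= n)%nat ->
      v3add (v3add (hat (q i t) (Mi0 i (dV2 (dV2 x) t)))
                   (v3scal (Mij i i) (dV3 (om i) t)))
            (v3opp (sumV3 n (fun j => if (j =? i)%nat then v3zero
                       else v3scal (Mij i j) (hat (q i t) (hat (q j t) (dV3 (om j) t))))))
      = v3add (sumV3 n (fun j => if (j =? i)%nat then v3zero
                   else v3scal (Mij i j * v3norm2 (om j t)) (hat (q i t) (q j t))))
              (v3scal (Mbar i * g * len i) (hat (q i t) e3)).

End Inertia.

(* Both the Lagrange-d'Alembert principle and the two forms of the Euler-Lagrange
   equations are equivalent to the balance laws
     d/dt (dL/dxdot) = u,    q_i x (d/dt (dL/dqdot_i) - dL/dq_i) = 0.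
   For the variational principle: the first variation of L is linear in
   (delta x, delta q_i, delta qdot_i); integrating the momentum terms by parts leaves
   the integral of (u - pdot_x) . delta x - sum_i (pdot_i - G_i) . (xi_i x q_i), and
   a . (xi x q) = xi . (q x a).  Bump variations then recover the balance laws.
   For the Euler-Lagrange equations it is pointwise algebra on the sphere: |q_i| = 1
   gives q_i . qddot_i = - |qdot_i|^2, so the i-th equation reads
   qhat_i^2 (pdot_i - G_i) = 0, and qhat_i^2 v = 0 iff qhat_i v = 0 since
   qhat_i^3 = - qhat_i; with qdot_i = omega_i x q_i one has
   qddot_i = - qhat_i omegadot_i - |omega_i|^2 q_i, which gives the omega-form. *)

From Stdlib Require Import Reals Lra Lia.
From Coquelicot Require Import Coquelicot.
Open Scope R_scope.

Ltac vsimpl :=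
  cbn [c1 c2 c3 d1 d2 v3add v3scal v3opp v3cross v3zero v2add v2scal v2zero Cmat CT e3].
Ltac vsimpl_all :=
  cbn [c1 c2 c3 d1 d2 v3add v3scal v3opp v3cross v3zero v2add v2scal v2zero Cmat CT e3] in *.

Lemma V3_ext (v w : V3) : c1 v = c1 w -> c2 v = c2 w -> c3 v = c3 w -> v = w.
Proof. destruct v, w; simpl; intros; subst; reflexivity. Qed.

Lemma V2_ext (v w : V2) : d1 v = d1 w -> d2 v = d2 w -> v = w.
Proof. destruct v, w; simpl; intros; subst; reflexivity. Qed.

Lemma v3add_opp_eq_l (b h : V3) : v3add b (v3opp h) = b <-> h = v3zero.
Proof.
  split; intro E; [|subst; apply V3_ext; vsimpl; ring].
  apply V3_ext; vsimpl;
    [apply (f_equal c1) in E | apply (f_equal c2) in E | apply (f_equal c3) in E];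
    vsimpl_all; lra.
Qed.

Lemma v3add_eq_l (b h : V3) : v3add b h = b <-> h = v3zero.
Proof.
  split; intro E; [|subst; apply V3_ext; vsimpl; ring].
  apply V3_ext; vsimpl;
    [apply (f_equal c1) in E | apply (f_equal c2) in E | apply (f_equal c3) in E];
    vsimpl_all; lra.
Qed.

Lemma v3dot_comm (a b : V3) : v3dot a b = v3dot b a.
Proof. unfold v3dot; ring. Qed.

Lemma v3dot_add_l (a b w : V3) : v3dot (v3add a b) w = v3dot a w + v3dot b w.
Proof. unfold v3dot; vsimpl; ring. Qed.

Lemma v3dot_scal_l (k : R) (a w : V3) : v3dot (v3scal k a) w = k * v3dot a w.
Proof. unfold v3dot; vsimpl; ring. Qed.

Lemma v3dot_cross (a xi q : V3) : v3dot a (v3cross xi q) = v3dot xi (hat q a).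
Proof. unfold v3dot, hat; vsimpl; ring. Qed.

Lemma sumR_ext (N : nat) (f g : nat -> R) :
  (forall i, (1 <= i <= N)%nat -> f i = g i) -> sumR N f = sumR N g.
Proof.
  induction N as [|N IH]; simpl; intros H; [reflexivity|].
  rewrite IH by (intros; apply H; lia). rewrite H by lia. reflexivity.
Qed.

Lemma sumR_add (N : nat) (f g : nat -> R) :
  sumR N (fun i => f i + g i) = sumR N f + sumR N g.
Proof. induction N as [|N IH]; simpl; [ring | rewrite IH; ring]. Qed.

Lemma sumR_opp (N : nat) (f : nat -> R) : sumR N (fun i => - f i) = - sumR N f.
Proof. induction N as [|N IH]; simpl; [ring | rewrite IH; ring]. Qed.

Lemma sumR_scal (N : nat) (k : R) (f : nat -> R) :
  sumR N (fun i => k * f i) = k * sumR N f.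
Proof. induction N as [|N IH]; simpl; [ring | rewrite IH; ring]. Qed.

Lemma sumR_zero (N : nat) : sumR N (fun _ => 0) = 0.
Proof. induction N as [|N IH]; simpl; [ring | rewrite IH; ring]. Qed.

Lemma sumR_swap (N M : nat) (f : nat -> nat -> R) :
  sumR N (fun i => sumR M (fun j => f i j)) = sumR M (fun j => sumR N (fun i => f i j)).
Proof.
  induction N as [|N IH]; simpl; [symmetry; apply sumR_zero|].
  rewrite IH, <- sumR_add. reflexivity.
Qed.

Lemma sumR_only (N i : nat) (f : nat -> R) :
  (1 <= i <= N)%nat -> (forall j, j <> i -> f j = 0) -> sumR N f = f i.
Proof.
  induction N as [|N IH]; intros Hi H; [lia|]; simpl.
  destruct (Nat.eq_dec i (S N)) as [->|ne].
  - rewrite (sumR_ext N f (fun _ => 0)) by (intros j Hj; apply H; lia).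
    rewrite sumR_zero; ring.
  - rewrite IH by (auto; lia). rewrite (H (S N)) by auto. ring.
Qed.

Lemma sumR_split_at (N i : nat) (f : nat -> R) : (1 <= i <= N)%nat ->
  sumR N f = f i + sumR N (fun j => if (j =? i)%nat then 0 else f j).
Proof.
  intros Hi.
  rewrite (sumR_ext N f (fun j => (if (j =? i)%nat then f j else 0)
                                 + (if (j =? i)%nat then 0 else f j)))
    by (intros j _; destruct (j =? i)%nat; ring).
  rewrite sumR_add, (sumR_only N i); [rewrite Nat.eqb_refl; reflexivity | auto |].
  intros j Hj. apply Nat.eqb_neq in Hj. rewrite Hj. reflexivity.
Qed.

Lemma c1_sumV3 (N : nat) (f : nat -> V3) : c1 (sumV3 N f) = sumR N (fun i => c1 (f i)).
Proof. induction N as [|N IH]; simpl; [reflexivity | rewrite IH; reflexivity]. Qed.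
Lemma c2_sumV3 (N : nat) (f : nat -> V3) : c2 (sumV3 N f) = sumR N (fun i => c2 (f i)).
Proof. induction N as [|N IH]; simpl; [reflexivity | rewrite IH; reflexivity]. Qed.
Lemma c3_sumV3 (N : nat) (f : nat -> V3) : c3 (sumV3 N f) = sumR N (fun i => c3 (f i)).
Proof. induction N as [|N IH]; simpl; [reflexivity | rewrite IH; reflexivity]. Qed.
Lemma d1_sumV2 (N : nat) (f : nat -> V2) : d1 (sumV2 N f) = sumR N (fun i => d1 (f i)).
Proof. induction N as [|N IH]; simpl; [reflexivity | rewrite IH; reflexivity]. Qed.
Lemma d2_sumV2 (N : nat) (f : nat -> V2) : d2 (sumV2 N f) = sumR N (fun i => d2 (f i)).
Proof. induction N as [|N IH]; simpl; [reflexivity | rewrite IH; reflexivity]. Qed.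

Lemma v3dot_sumV3_l (N : nat) (f : nat -> V3) (w : V3) :
  v3dot (sumV3 N f) w = sumR N (fun j => v3dot (f j) w).
Proof.
  induction N as [|N IH]; simpl; [unfold v3dot; vsimpl; ring|].
  rewrite <- IH. unfold v3dot; vsimpl; ring.
Qed.

Lemma sumV3_ext (N : nat) (f g : nat -> V3) :
  (forall i, (1 <= i <= N)%nat -> f i = g i) -> sumV3 N f = sumV3 N g.
Proof.
  induction N as [|N IH]; simpl; intros H; [reflexivity|].
  rewrite IH by (intros; apply H; lia). rewrite H by lia. reflexivity.
Qed.

Lemma sumV3_additive (L : V3 -> V3) (N : nat) (f : nat -> V3) :
  (forall a b, L (v3add a b) = v3add (L a) (L b)) -> L v3zero = v3zero ->
  L (sumV3 N f) = sumV3 N (fun j => L (f j)).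
Proof. intros HA H0. induction N as [|N IH]; simpl; auto. rewrite HA, IH; auto. Qed.

Lemma sumV3_split_at (N i : nat) (f : nat -> V3) : (1 <= i <= N)%nat ->
  sumV3 N f = v3add (f i) (sumV3 N (fun j => if (j =? i)%nat then v3zero else f j)).
Proof.
  intros Hi. apply V3_ext; vsimpl; rewrite ?c1_sumV3, ?c2_sumV3, ?c3_sumV3;
    rewrite (sumR_split_at N i) by auto; f_equal; apply sumR_ext; intros j _;
    destruct (j =? i)%nat; reflexivity.
Qed.

Lemma hat_add (q a b : V3) : hat q (v3add a b) = v3add (hat q a) (hat q b).
Proof. apply V3_ext; unfold hat; vsimpl; ring. Qed.
Lemma hat_opp (q a : V3) : hat q (v3opp a) = v3opp (hat q a).
Proof. apply V3_ext; unfold hat; vsimpl; ring. Qed.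
Lemma hat_scal (q : V3) (k : R) (a : V3) : hat q (v3scal k a) = v3scal k (hat q a).
Proof. apply V3_ext; unfold hat; vsimpl; ring. Qed.
Lemma hat_zero (q : V3) : hat q v3zero = v3zero.
Proof. apply V3_ext; unfold hat; vsimpl; ring. Qed.

Lemma hat2_add (q a b : V3) : hat2 q (v3add a b) = v3add (hat2 q a) (hat2 q b).
Proof. unfold hat2; rewrite !hat_add; reflexivity. Qed.
Lemma hat2_opp (q a : V3) : hat2 q (v3opp a) = v3opp (hat2 q a).
Proof. unfold hat2; rewrite !hat_opp; reflexivity. Qed.
Lemma hat2_scal (q : V3) (k : R) (a : V3) : hat2 q (v3scal k a) = v3scal k (hat2 q a).
Proof. unfold hat2; rewrite !hat_scal; reflexivity. Qed.
Lemma hat2_zero (q : V3) : hat2 q v3zero = v3zero.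
Proof. unfold hat2; rewrite !hat_zero; reflexivity. Qed.

Lemma hat2_unit (q v : V3) : v3norm2 q = 1 -> hat2 q v = v3add (v3scal (v3dot q v) q) (v3opp v).
Proof.
  intros Hq.
  transitivity (v3add (v3scal (v3dot q v) q) (v3scal (- v3norm2 q) v)).
  - apply V3_ext; unfold hat2, hat, v3norm2, v3dot; vsimpl; ring.
  - rewrite Hq. apply V3_ext; vsimpl; ring.
Qed.

Lemma hat2_eq0_iff (q v : V3) : v3norm2 q = 1 -> hat2 q v = v3zero <-> hat q v = v3zero.
Proof.
  intros Hq; split; intro H; [|unfold hat2; rewrite H; apply hat_zero].
  assert (E : hat q (hat2 q v) = v3scal (- v3norm2 q) (hat q v)).
  { apply V3_ext; unfold hat2, hat, v3norm2, v3dot; vsimpl; ring. }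
  rewrite H, hat_zero, Hq in E.
  apply V3_ext; vsimpl;
    [apply (f_equal c1) in E | apply (f_equal c2) in E | apply (f_equal c3) in E];
    vsimpl_all; lra.
Qed.

Lemma is_derive_Rplus (f h : R -> R) (t a b : R) :
  is_derive f t a -> is_derive h t b -> is_derive (fun s => f s + h s) t (a + b).
Proof. intros; apply (is_derive_plus f h); auto. Qed.
Lemma is_derive_Rminus (f h : R -> R) (t a b : R) :
  is_derive f t a -> is_derive h t b -> is_derive (fun s => f s - h s) t (a - b).
Proof. intros; apply (is_derive_minus f h); auto. Qed.
Lemma is_derive_Rmult (f h : R -> R) (t a b : R) :
  is_derive f t a -> is_derive h t b -> is_derive (fun s => f s * h s) t (a * h t + f t * b).
Proof. intros; apply (is_derive_mult f h); auto. intros; apply Rmult_comm. Qed.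
Lemma is_derive_Rscal (f : R -> R) (t k a : R) :
  is_derive f t a -> is_derive (fun s => k * f s) t (k * a).
Proof. apply is_derive_scal. Qed.
Lemma is_derive_Ropp (f : R -> R) (t a : R) :
  is_derive f t a -> is_derive (fun s => - f s) t (- a).
Proof. intros; apply (@is_derive_opp R_AbsRing R_NormedModule f); auto. Qed.
Lemma is_derive_Rconst (c t : R) : is_derive (fun _ => c) t 0.
Proof. apply (is_derive_const c). Qed.
Lemma is_derive_Rid (t : R) : is_derive (fun s => s) t 1.
Proof. apply (is_derive_id t). Qed.
Lemma is_derive_sumR (N : nat) (f : nat -> R -> R) (f' : nat -> R) (t : R) :
  (forall i, (1 <= i <= N)%nat -> is_derive (f i) t (f' i)) ->
  is_derive (fun s => sumR N (fun i => f i s)) t (sumR N f').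
Proof.
  induction N as [|N IH]; intros H; simpl; [apply is_derive_Rconst|].
  apply is_derive_Rplus; [apply IH; intros; apply H; lia | apply H; lia].
Qed.
Lemma is_derive_eq (f : R -> R) (t a b : R) : is_derive f t a -> a = b -> is_derive f t b.
Proof. intros; subst; auto. Qed.

Lemma is_derive_of_constant (f : R -> R) (t a c : R) :
  is_derive f t a -> (forall s, f s = c) -> a = 0.
Proof.
  intros H Hc. apply (is_derive_unique f t a) in H. rewrite <- H.
  apply is_derive_unique, (is_derive_ext (fun _ => c)); [intro; symmetry; auto|].
  apply is_derive_Rconst.
Qed.

Lemma continuous_Rplus (f h : R -> R) (t : R) :
  continuous f t -> continuous h t -> continuous (fun s => f s + h s) t.
Proof. intros; apply (continuous_plus f h); auto. Qed.
Lemma continuous_Rminus (f h : R -> R) (t : R) :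
  continuous f t -> continuous h t -> continuous (fun s => f s - h s) t.
Proof. intros; apply (continuous_minus f h); auto. Qed.
Lemma continuous_Rmult (f h : R -> R) (t : R) :
  continuous f t -> continuous h t -> continuous (fun s => f s * h s) t.
Proof. intros; apply (continuous_mult f h); auto. Qed.
Lemma continuous_Ropp (f : R -> R) (t : R) : continuous f t -> continuous (fun s => - f s) t.
Proof. intros; apply (continuous_opp f); auto. Qed.
Lemma continuous_sumR (N : nat) (f : nat -> R -> R) (t : R) :
  (forall i, (1 <= i <= N)%nat -> continuous (f i) t) ->
  continuous (fun s => sumR N (fun i => f i s)) t.
Proof.
  induction N as [|N IH]; intros H; simpl; [apply continuous_const|].
  apply continuous_Rplus; [apply IH; intros; apply H; lia | apply H; lia].
Qed.

Lemma C1_is_derive (f : R -> R) (t : R) : C1 f -> is_derive f t (Derive f t).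
Proof. intros [H _]; apply Derive_correct; auto. Qed.
Lemma C1_continuous (f : R -> R) (t : R) : C1 f -> continuous f t.
Proof. intros [H _]; apply (@ex_derive_continuous R_AbsRing R_NormedModule); auto. Qed.
Lemma C1_continuous_Derive (f : R -> R) (t : R) : C1 f -> continuous (Derive f) t.
Proof. intros [_ H]; auto. Qed.

Lemma C1_of_is_derive (f f' : R -> R) :
  (forall t, is_derive f t (f' t)) -> (forall t, continuous f' t) -> C1 f.
Proof.
  intros Hd Hc; split; [intro t; eexists; apply Hd|].
  intro t. apply (continuous_ext f'); [|apply Hc].
  intro s; symmetry; apply is_derive_unique, Hd.
Qed.

Lemma C1_mult (f h : R -> R) : C1 f -> C1 h -> C1 (fun s => f s * h s).
Proof.
  intros Hf Hh. apply (C1_of_is_derive _ (fun s => Derive f s * h s + f s * Derive h s)).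
  - intro t; apply is_derive_Rmult; apply C1_is_derive; auto.
  - intro t; apply continuous_Rplus; apply continuous_Rmult;
      auto using C1_continuous, C1_continuous_Derive.
Qed.
Lemma C1_minus (f h : R -> R) : C1 f -> C1 h -> C1 (fun s => f s - h s).
Proof.
  intros Hf Hh. apply (C1_of_is_derive _ (fun s => Derive f s - Derive h s)).
  - intro t; apply is_derive_Rminus; apply C1_is_derive; auto.
  - intro t; apply continuous_Rminus; auto using C1_continuous_Derive.
Qed.
Lemma C1_const (c : R) : C1 (fun _ => c).
Proof.
  apply (C1_of_is_derive _ (fun _ => 0)); [intro; apply is_derive_Rconst|].
  intro; apply continuous_const.
Qed.
Lemma C1_id : C1 (fun s => s).
Proof.
  apply (C1_of_is_derive _ (fun _ => 1)); [intro t; apply is_derive_Rid|].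
  intro; apply continuous_const.
Qed.

Definition is_derive_V3 (f : R -> V3) (t : R) (v : V3) : Prop :=
  is_derive (fun s => c1 (f s)) t (c1 v) /\ is_derive (fun s => c2 (f s)) t (c2 v) /\
  is_derive (fun s => c3 (f s)) t (c3 v).
Definition is_derive_V2 (f : R -> V2) (t : R) (v : V2) : Prop :=
  is_derive (fun s => d1 (f s)) t (d1 v) /\ is_derive (fun s => d2 (f s)) t (d2 v).
Definition continuous_V3 (f : R -> V3) (t : R) : Prop :=
  continuous (fun s => c1 (f s)) t /\ continuous (fun s => c2 (f s)) t /\
  continuous (fun s => c3 (f s)) t.
Definition continuous_V2 (f : R -> V2) (t : R) : Prop :=
  continuous (fun s => d1 (f s)) t /\ continuous (fun s => d2 (f s)) t.

Ltac split_components :=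
  match goal with
  | |- is_derive_V3 _ _ _ => refine (conj _ (conj _ _)); vsimpl
  | |- is_derive_V2 _ _ _ => refine (conj _ _); vsimpl
  | |- continuous_V3 _ _ => refine (conj _ (conj _ _)); vsimpl
  | |- continuous_V2 _ _ => refine (conj _ _); vsimpl
  end.
Ltac destruct_components :=
  repeat match goal with
  | H : is_derive_V3 _ _ _ |- _ => destruct H as (? & ? & ?)
  | H : is_derive_V2 _ _ _ |- _ => destruct H as (? & ?)
  | H : continuous_V3 _ _ |- _ => destruct H as (? & ? & ?)
  | H : continuous_V2 _ _ |- _ => destruct H as (? & ?)
  end.

Section Derivatives.

Variables (t : R) (v w : V3) (V W : V2).

Lemma is_derive_V3_add (f h : R -> V3) : is_derive_V3 f t v -> is_derive_V3 h t w ->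
  is_derive_V3 (fun s => v3add (f s) (h s)) t (v3add v w).
Proof. intros; destruct_components; split_components; apply is_derive_Rplus; auto. Qed.
Lemma is_derive_V3_scal (k : R) (f : R -> V3) : is_derive_V3 f t v ->
  is_derive_V3 (fun s => v3scal k (f s)) t (v3scal k v).
Proof. intros; destruct_components; split_components; apply is_derive_Rscal; auto. Qed.
Lemma is_derive_V3_const (c : V3) : is_derive_V3 (fun _ => c) t v3zero.
Proof. split_components; apply is_derive_Rconst. Qed.
Lemma is_derive_V3_cross (f h : R -> V3) : is_derive_V3 f t v -> is_derive_V3 h t w ->
  is_derive_V3 (fun s => v3cross (f s) (h s)) t (v3add (v3cross v (h t)) (v3cross (f t) w)).
Proof.
  intros; destruct_components; split_components;
    (eapply is_derive_eq; [apply is_derive_Rminus; apply is_derive_Rmult; eassumption | cbv beta; ring]).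
Qed.
Lemma is_derive_V3_Mi0 n mass len i (f : R -> V2) : is_derive_V2 f t V ->
  is_derive_V3 (fun s => Mi0 n mass len i (f s)) t (Mi0 n mass len i V).
Proof.
  intros; destruct_components; unfold Mi0; split_components;
    apply is_derive_Rscal; auto using is_derive_Rconst.
Qed.
Lemma is_derive_v3dot (f h : R -> V3) : is_derive_V3 f t v -> is_derive_V3 h t w ->
  is_derive (fun s => v3dot (f s) (h s)) t (v3dot v (h t) + v3dot (f t) w).
Proof.
  intros; destruct_components; unfold v3dot; eapply is_derive_eq;
    [apply is_derive_Rplus; [apply is_derive_Rplus|]; apply is_derive_Rmult; eassumption
     | cbv beta; ring].
Qed.
Lemma is_derive_V3_unique (f : R -> V3) : is_derive_V3 f t v -> dV3 f t = v.
Proof.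
  intros; destruct_components; apply V3_ext; unfold dV3; vsimpl;
    apply is_derive_unique; auto.
Qed.
Lemma is_derive_V3_ext (f h : R -> V3) :
  (forall s, f s = h s) -> is_derive_V3 h t v -> is_derive_V3 f t v.
Proof.
  intros E; intros; destruct_components; split_components;
    (eapply is_derive_ext; [|eassumption]); intro s; rewrite E; reflexivity.
Qed.

Lemma is_derive_V2_add (f h : R -> V2) : is_derive_V2 f t V -> is_derive_V2 h t W ->
  is_derive_V2 (fun s => v2add (f s) (h s)) t (v2add V W).
Proof. intros; destruct_components; split_components; apply is_derive_Rplus; auto. Qed.
Lemma is_derive_V2_scal (k : R) (f : R -> V2) : is_derive_V2 f t V ->
  is_derive_V2 (fun s => v2scal k (f s)) t (v2scal k V).
Proof. intros; destruct_components; split_components; apply is_derive_Rscal; auto. Qed.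
Lemma is_derive_V2_M0 n mass len i (f : R -> V3) : is_derive_V3 f t v ->
  is_derive_V2 (fun s => M0 n mass len i (f s)) t (M0 n mass len i v).
Proof. intros; destruct_components; unfold M0; split_components; apply is_derive_Rscal; auto. Qed.
Lemma is_derive_v2dot (f h : R -> V2) : is_derive_V2 f t V -> is_derive_V2 h t W ->
  is_derive (fun s => v2dot (f s) (h s)) t (v2dot V (h t) + v2dot (f t) W).
Proof.
  intros; destruct_components; unfold v2dot; eapply is_derive_eq;
    [apply is_derive_Rplus; apply is_derive_Rmult; eassumption | cbv beta; ring].
Qed.

End Derivatives.

Lemma is_derive_V3_sum (N : nat) (f : nat -> R -> V3) (t : R) (v : nat -> V3) :
  (forall j, (1 <= j <= N)%nat -> is_derive_V3 (f j) t (v j)) ->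
  is_derive_V3 (fun s => sumV3 N (fun j => f j s)) t (sumV3 N v).
Proof.
  induction N as [|N IH]; intros H; simpl; [apply is_derive_V3_const|].
  apply is_derive_V3_add; [apply IH; intros; apply H; lia | apply H; lia].
Qed.
Lemma is_derive_V2_sum (N : nat) (f : nat -> R -> V2) (t : R) (v : nat -> V2) :
  (forall j, (1 <= j <= N)%nat -> is_derive_V2 (f j) t (v j)) ->
  is_derive_V2 (fun s => sumV2 N (fun j => f j s)) t (sumV2 N v).
Proof.
  induction N as [|N IH]; intros H; simpl; [split_components; apply is_derive_Rconst|].
  apply is_derive_V2_add; [apply IH; intros; apply H; lia | apply H; lia].
Qed.

Lemma is_derive_V3_affine (a b : V3) (t : R) : is_derive_V3 (fun e => v3add a (v3scal e b)) t b.
Proof.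
  split_components; (eapply is_derive_eq;
    [apply is_derive_Rplus; [apply is_derive_Rconst | apply is_derive_Rmult;
       [apply is_derive_Rid | apply is_derive_Rconst]] | cbv beta; ring]).
Qed.
Lemma is_derive_V2_affine (a b : V2) (t : R) : is_derive_V2 (fun e => v2add a (v2scal e b)) t b.
Proof.
  split_components; (eapply is_derive_eq;
    [apply is_derive_Rplus; [apply is_derive_Rconst | apply is_derive_Rmult;
       [apply is_derive_Rid | apply is_derive_Rconst]] | cbv beta; ring]).
Qed.

Lemma is_derive_v3dot_affine (a b c d : V3) :
  is_derive (fun e => v3dot (v3add a (v3scal e b)) (v3add c (v3scal e d))) 0
    (v3dot a d + v3dot b c).
Proof.
  eapply is_derive_eq; [apply is_derive_v3dot; apply is_derive_V3_affine|].
  unfold v3dot; vsimpl; ring.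
Qed.
Lemma is_derive_v2dot_affine (a b c d : V2) :
  is_derive (fun e => v2dot (v2add a (v2scal e b)) (v2add c (v2scal e d))) 0
    (v2dot a d + v2dot b c).
Proof.
  eapply is_derive_eq; [apply is_derive_v2dot; apply is_derive_V2_affine|].
  unfold v2dot; vsimpl; ring.
Qed.

Section Continuity.

Variable t : R.

Lemma continuous_V3_add (f h : R -> V3) : continuous_V3 f t -> continuous_V3 h t ->
  continuous_V3 (fun s => v3add (f s) (h s)) t.
Proof. intros; destruct_components; split_components; apply continuous_Rplus; auto. Qed.
Lemma continuous_V3_scal (k : R) (f : R -> V3) : continuous_V3 f t ->
  continuous_V3 (fun s => v3scal k (f s)) t.
Proof.
  intros; destruct_components; split_components;
    apply continuous_Rmult; auto using continuous_const.
Qed.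
Lemma continuous_V3_const (c : V3) : continuous_V3 (fun _ => c) t.
Proof. split_components; apply continuous_const. Qed.
Lemma continuous_V3_cross (f h : R -> V3) : continuous_V3 f t -> continuous_V3 h t ->
  continuous_V3 (fun s => v3cross (f s) (h s)) t.
Proof.
  intros; destruct_components; split_components;
    apply continuous_Rminus; apply continuous_Rmult; auto.
Qed.
Lemma continuous_V3_Mi0 n mass len i (f : R -> V2) : continuous_V2 f t ->
  continuous_V3 (fun s => Mi0 n mass len i (f s)) t.
Proof.
  intros; destruct_components; unfold Mi0; split_components;
    apply continuous_Rmult; auto using continuous_const.
Qed.
Lemma continuous_v3dot (f h : R -> V3) : continuous_V3 f t -> continuous_V3 h t ->
  continuous (fun s => v3dot (f s) (h s)) t.
Proof.
  intros; destruct_components; unfold v3dot;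
    apply continuous_Rplus; [apply continuous_Rplus|]; apply continuous_Rmult; auto.
Qed.

Lemma continuous_V2_add (f h : R -> V2) : continuous_V2 f t -> continuous_V2 h t ->
  continuous_V2 (fun s => v2add (f s) (h s)) t.
Proof. intros; destruct_components; split_components; apply continuous_Rplus; auto. Qed.
Lemma continuous_V2_scal (k : R) (f : R -> V2) : continuous_V2 f t ->
  continuous_V2 (fun s => v2scal k (f s)) t.
Proof.
  intros; destruct_components; split_components;
    apply continuous_Rmult; auto using continuous_const.
Qed.
Lemma continuous_V2_M0 n mass len i (f : R -> V3) : continuous_V3 f t ->
  continuous_V2 (fun s => M0 n mass len i (f s)) t.
Proof.
  intros; destruct_components; unfold M0; split_components;
    apply continuous_Rmult; auto using continuous_const.
Qed.
Lemma continuous_v2dot (f h : R -> V2) : continuous_V2 f t -> continuous_V2 h t ->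
  continuous (fun s => v2dot (f s) (h s)) t.
Proof.
  intros; destruct_components; unfold v2dot;
    apply continuous_Rplus; apply continuous_Rmult; auto.
Qed.

Lemma continuous_V3_sum (N : nat) (f : nat -> R -> V3) :
  (forall j, (1 <= j <= N)%nat -> continuous_V3 (f j) t) ->
  continuous_V3 (fun s => sumV3 N (fun j => f j s)) t.
Proof.
  induction N as [|N IH]; intros H; simpl; [apply continuous_V3_const|].
  apply continuous_V3_add; [apply IH; intros; apply H; lia | apply H; lia].
Qed.
Lemma continuous_V2_sum (N : nat) (f : nat -> R -> V2) :
  (forall j, (1 <= j <= N)%nat -> continuous_V2 (f j) t) ->
  continuous_V2 (fun s => sumV2 N (fun j => f j s)) t.
Proof.
  induction N as [|N IH]; intros H; simpl; [split_components; apply continuous_const|].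
  apply continuous_V2_add; [apply IH; intros; apply H; lia | apply H; lia].
Qed.

End Continuity.

Section Regularity.

Variable t : R.

Lemma C1_V3_is_derive (f : R -> V3) : C1_V3 f -> is_derive_V3 f t (dV3 f t).
Proof. intros (? & ? & ?); split_components; apply C1_is_derive; auto. Qed.
Lemma C1_V3_continuous (f : R -> V3) : C1_V3 f -> continuous_V3 f t.
Proof. intros (? & ? & ?); split_components; apply C1_continuous; auto. Qed.
Lemma C1_V3_continuous_dV3 (f : R -> V3) : C1_V3 f -> continuous_V3 (dV3 f) t.
Proof. intros (? & ? & ?); split_components; apply C1_continuous_Derive; auto. Qed.

Lemma C1_V2_is_derive (f : R -> V2) : C1_V2 f -> is_derive_V2 f t (dV2 f t).
Proof. intros (? & ?); split_components; apply C1_is_derive; auto. Qed.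
Lemma C1_V2_continuous (f : R -> V2) : C1_V2 f -> continuous_V2 f t.
Proof. intros (? & ?); split_components; apply C1_continuous; auto. Qed.
Lemma C1_V2_continuous_dV2 (f : R -> V2) : C1_V2 f -> continuous_V2 (dV2 f) t.
Proof. intros (? & ?); split_components; apply C1_continuous_Derive; auto. Qed.

End Regularity.

Lemma C2_V3_C1 (f : R -> V3) : C2_V3 f -> C1_V3 f /\ C1_V3 (dV3 f).
Proof. intros ((? & ?) & (? & ?) & (? & ?)); split; refine (conj _ (conj _ _)); assumption. Qed.
Lemma C2_V2_C1 (f : R -> V2) : C2_V2 f -> C1_V2 f /\ C1_V2 (dV2 f).
Proof. intros ((? & ?) & (? & ?)); split; refine (conj _ _); assumption. Qed.

Lemma C1_V3_const (c : V3) : C1_V3 (fun _ => c).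
Proof. refine (conj _ (conj _ _)); apply C1_const. Qed.
Lemma C1_V3_cross (f h : R -> V3) : C1_V3 f -> C1_V3 h -> C1_V3 (fun s => v3cross (f s) (h s)).
Proof. intros (? & ? & ?) (? & ? & ?); refine (conj _ (conj _ _)); vsimpl; apply C1_minus; apply C1_mult; auto. Qed.
Lemma C1_V3_scal (k : R -> R) (f : R -> V3) : C1 k -> C1_V3 f -> C1_V3 (fun s => v3scal (k s) (f s)).
Proof. intros ? (? & ? & ?); refine (conj _ (conj _ _)); vsimpl; apply C1_mult; auto. Qed.
Lemma C1_V2_scal (k : R -> R) (c : V2) : C1 k -> C1_V2 (fun s => v2scal (k s) c).
Proof. intros; refine (conj _ _); vsimpl; apply C1_mult; auto using C1_const. Qed.
Lemma C1_V2_const (c : V2) : C1_V2 (fun _ => c).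
Proof. refine (conj _ _); apply C1_const. Qed.

(** * Curves on the unit sphere *)

Section SphereCurves.

Variables q w : R -> V3.

Hypothesis (Hq : C2_V3 q) (Hunit : forall s, v3norm2 (q s) = 1).

Lemma unit_dot_velocity (t : R) : v3dot (q t) (dV3 q t) = 0.
Proof.
  pose proof (C1_V3_is_derive t q (proj1 (C2_V3_C1 q Hq))) as Dq.
  pose proof (is_derive_v3dot t _ _ q q Dq Dq) as D.
  apply (is_derive_of_constant _ _ _ 1) in D; [|apply Hunit].
  rewrite v3dot_comm in D. lra.
Qed.

Lemma unit_dot_acceleration (t : R) : v3dot (q t) (dV3 (dV3 q) t) = - v3norm2 (dV3 q t).
Proof.
  destruct (C2_V3_C1 q Hq) as [Hq1 Hq2].
  pose proof (is_derive_v3dot t _ _ q (dV3 q)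
                (C1_V3_is_derive t q Hq1) (C1_V3_is_derive t _ Hq2)) as D.
  apply (is_derive_of_constant _ _ _ 0) in D; [|apply unit_dot_velocity].
  unfold v3norm2. lra.
Qed.

Hypothesis (Hw : C1_V3 w)
  (Hrot : forall s, dV3 q s = v3cross (w s) (q s) /\ v3dot (w s) (q s) = 0).

Lemma acceleration_of_angular_velocity (t : R) :
  dV3 (dV3 q) t = v3add (v3opp (hat (q t) (dV3 w t))) (v3scal (- v3norm2 (w t)) (q t)).
Proof.
  destruct (C2_V3_C1 q Hq) as [Hq1 _].
  rewrite (is_derive_V3_unique t (v3add (v3cross (dV3 w t) (q t)) (v3cross (w t) (dV3 q t))) (dV3 q)).
  - destruct (Hrot t) as [E1 E2]. rewrite E1.
    transitivity (v3add (v3opp (hat (q t) (dV3 w t)))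
                    (v3add (v3scal (v3dot (w t) (q t)) (w t)) (v3scal (- v3norm2 (w t)) (q t)))).
    + apply V3_ext; unfold hat, v3norm2, v3dot; vsimpl; ring.
    + rewrite E2. apply V3_ext; vsimpl; ring.
  - apply (is_derive_V3_ext t _ _ (fun s => v3cross (w s) (q s))); [intro s; apply Hrot|].
    apply is_derive_V3_cross; apply C1_V3_is_derive; auto.
Qed.

Lemma unit_dot_angular_acceleration (t : R) : v3dot (q t) (dV3 w t) = 0.
Proof.
  destruct (C2_V3_C1 q Hq) as [Hq1 _].
  pose proof (is_derive_v3dot t _ _ w q (C1_V3_is_derive t w Hw) (C1_V3_is_derive t q Hq1)) as D.
  apply (is_derive_of_constant _ _ _ 0) in D; [|intro s; apply Hrot].
  destruct (Hrot t) as [E1 _]. rewrite E1 in D.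
  assert (Z : v3dot (w t) (v3cross (w t) (q t)) = 0) by (unfold v3dot; vsimpl; ring).
  rewrite v3dot_comm. lra.
Qed.

End SphereCurves.

(** * The fundamental lemma of the calculus of variations *)

Definition bump (a b s : R) : R := (s - a) * (s - a) * ((b - s) * (b - s)).

Lemma bump_C1 (a b : R) : C1 (bump a b).
Proof. unfold bump. apply C1_mult; apply C1_mult; apply C1_minus; auto using C1_id, C1_const. Qed.

Lemma bump_pos (a b s : R) : a < s < b -> 0 < bump a b s.
Proof.
  intros Hs; unfold bump.
  apply Rmult_lt_0_compat; apply Rmult_lt_0_compat; lra.
Qed.

Lemma bump_l (a b : R) : bump a b a = 0.
Proof. unfold bump; ring. Qed.
Lemma bump_r (a b : R) : bump a b b = 0.
Proof. unfold bump; ring. Qed.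

Lemma continuous_pos_near (h : R -> R) (t : R) : continuous h t -> 0 < h t ->
  exists d, 0 < d /\ forall s, Rabs (s - t) < d -> 0 < h s.
Proof.
  intros Hc Hp. apply continuity_pt_filterlim in Hc.
  destruct (Hc (h t / 2)) as [d [Hd Hball]]; [lra|].
  exists d; split; auto. intros s Hs.
  destruct (Req_dec s t) as [->|Hne]; auto.
  assert (Hclose : Rabs (h s - h t) < h t / 2).
  { apply (Hball s). split; [split; [constructor | auto] | simpl; unfold R_dist; auto]. }
  apply Rabs_def2 in Hclose. lra.
Qed.

Lemma bump_orthogonal_not_pos (h : R -> R) (t : R) : (forall s, continuous h s) ->
  (forall a b, a < b -> RInt (fun s => bump a b s * h s) a b = 0) -> ~ (0 < h t).
Proof.
  intros Hc Horth Hpos. destruct (continuous_pos_near h t (Hc t) Hpos) as [d [Hd Hh]].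
  assert (Hint : 0 < RInt (fun s => bump (t - d / 2) (t + d / 2) s * h s) (t - d / 2) (t + d / 2)).
  { apply RInt_gt_0; [lra | |].
    - intros s Hs. apply Rmult_lt_0_compat; [apply bump_pos; auto|].
      apply Hh, Rabs_def1; lra.
    - intros s _. apply continuous_Rmult; auto using C1_continuous, bump_C1. }
  rewrite Horth in Hint; lra.
Qed.

Lemma bump_orthogonal_eq0 (h : R -> R) : (forall s, continuous h s) ->
  (forall a b, a < b -> RInt (fun s => bump a b s * h s) a b = 0) -> forall t, h t = 0.
Proof.
  intros Hc Horth t.
  destruct (Rtotal_order (h t) 0) as [Hlt | [Heq | Hgt]]; auto; exfalso.
  - apply (bump_orthogonal_not_pos (fun s => - h s) t); [intro; apply continuous_Ropp; auto | | lra].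
    intros a b Hab.
    rewrite (RInt_ext _ (fun s => opp (bump a b s * h s))) by (intros; unfold opp; simpl; ring).
    rewrite (@RInt_opp R_CompleteNormedModule), Horth; auto; [unfold opp; simpl; ring|].
    apply (@ex_RInt_continuous R_CompleteNormedModule).
    intros; apply continuous_Rmult; auto using C1_continuous, bump_C1.
  - apply (bump_orthogonal_not_pos h t); auto.
Qed.

Section Chain.

Variables (n : nat) (m : R) (mass len : nat -> R) (g : R).

Definition cart_momentum (X : V2) (Q : nat -> V3) : V2 :=
  v2add (v2scal (M00 n m mass) X) (sumV2 n (fun j => M0 n mass len j (Q j))).
Definition link_momentum (i : nat) (X : V2) (Q : nat -> V3) : V3 :=
  v3add (Mi0 n mass len i X) (sumV3 n (fun j => v3scal (Mij n mass len i j) (Q j))).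
Definition gravity_force (i : nat) : V3 := v3scal (Mbar n mass i * g * len i) e3.
Definition link_imbalance (i : nat) (X : V2) (Q : nat -> V3) : V3 :=
  v3add (link_momentum i X Q) (v3opp (gravity_force i)).

Lemma Mij_sym (i j : nat) : Mij n mass len i j = Mij n mass len j i.
Proof. unfold Mij. rewrite Nat.max_comm. ring. Qed.

Lemma v2dot_sum_M0 (X : V2) (Q : nat -> V3) :
  v2dot X (sumV2 n (fun i => M0 n mass len i (Q i)))
  = sumR n (fun i => v3dot (Mi0 n mass len i X) (Q i)).
Proof.
  unfold v2dot. rewrite d1_sumV2, d2_sumV2, <- !sumR_scal, <- sumR_add.
  apply sumR_ext; intros. unfold M0, Mi0, v3dot; vsimpl; ring.
Qed.

Lemma sum_Mij_dot_swap (Q dQ : nat -> V3) :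
  sumR n (fun i => sumR n (fun j => Mij n mass len i j * v3dot (Q i) (dQ j)))
  = sumR n (fun i => sumR n (fun j => Mij n mass len i j * v3dot (Q j) (dQ i))).
Proof.
  rewrite sumR_swap. apply sumR_ext; intros i _. apply sumR_ext; intros j _.
  rewrite Mij_sym. reflexivity.
Qed.

Lemma sumV2_M0_affine (Q dQ : nat -> V3) (e : R) :
  sumV2 n (fun i => M0 n mass len i (v3add (Q i) (v3scal e (dQ i))))
  = v2add (sumV2 n (fun i => M0 n mass len i (Q i)))
          (v2scal e (sumV2 n (fun i => M0 n mass len i (dQ i)))).
Proof.
  apply V2_ext; vsimpl; rewrite !d1_sumV2 || rewrite !d2_sumV2;
    rewrite <- sumR_scal, <- sumR_add; apply sumR_ext; intros; unfold M0; vsimpl; ring.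
Qed.

Lemma Lag_first_variation (X Y : V2) (q0 dq Q dQ : nat -> V3) :
  is_derive (fun e => Lag n m mass len g (v2add X (v2scal e Y))
                 (fun i => v3add (q0 i) (v3scal e (dq i)))
                 (fun i => v3add (Q i) (v3scal e (dQ i)))) 0
    (v2dot (cart_momentum X Q) Y
     + sumR n (fun i => v3dot (link_momentum i X Q) (dQ i))
     + sumR n (fun i => v3dot (gravity_force i) (dq i))).
Proof.
  unfold Lag, Kin, Pot.
  eapply is_derive_ext; [intro e; rewrite sumV2_M0_affine; reflexivity|].
  eapply is_derive_eq.
  - apply is_derive_Rminus; [apply is_derive_Rplus; [apply is_derive_Rplus|] | apply is_derive_Ropp].
    + apply is_derive_Rscal, is_derive_v2dot_affine.
    + apply is_derive_v2dot_affine.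
    + apply is_derive_Rscal, is_derive_sumR; intros i _; apply is_derive_sumR; intros j _.
      apply is_derive_Rscal, is_derive_v3dot_affine.
    + apply is_derive_sumR; intros i _. apply is_derive_Rscal.
      eapply (is_derive_eq _ 0 _ (v3dot e3 (dq i)));
        [apply is_derive_v3dot; [apply is_derive_V3_const | apply is_derive_V3_affine]|].
      unfold v3dot; vsimpl; ring.
  - cbv beta.
    (* the kinetic cross terms [Q_i . dQ_j + dQ_i . Q_j] count twice by the symmetry of M_ij *)
    rewrite (sumR_ext n _ (fun i => sumR n (fun j => Mij n mass len i j * v3dot (Q i) (dQ j))
                               + sumR n (fun j => Mij n mass len i j * v3dot (Q j) (dQ i))))
      by (intros i _; rewrite <- sumR_add; apply sumR_ext; intros j _;
          rewrite (v3dot_comm (dQ i)); ring).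
    rewrite sumR_add, sum_Mij_dot_swap.
    unfold cart_momentum, link_momentum, gravity_force.
    rewrite (sumR_ext n (fun i => v3dot (v3add _ _) (dQ i))
               (fun i => v3dot (Mi0 n mass len i X) (dQ i)
                         + sumR n (fun j => Mij n mass len i j * v3dot (Q j) (dQ i))))
      by (intros i _; rewrite v3dot_add_l, v3dot_sumV3_l; f_equal;
          apply sumR_ext; intros; apply v3dot_scal_l).
    rewrite (sumR_ext n (fun i => v3dot (v3scal _ e3) (dq i))
               (fun i => Mbar n mass i * g * len i * v3dot e3 (dq i)))
      by (intros; apply v3dot_scal_l).
    rewrite sumR_add, <- v2dot_sum_M0.
    unfold v2dot; vsimpl. field.
Qed.

Definition link_equation_q (i : nat) (qi qdi : V3) (Xdd : V2) (Qdd : nat -> V3) : Prop :=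
  v3add (v3add (v3opp (hat2 qi (Mi0 n mass len i Xdd))) (v3scal (Mij n mass len i i) (Qdd i)))
        (v3opp (sumV3 n (fun j => if (j =? i)%nat then v3zero
                                  else v3scal (Mij n mass len i j) (hat2 qi (Qdd j)))))
  = v3add (v3scal (- (v3norm2 qdi * Mij n mass len i i)) qi)
          (v3scal (- (Mbar n mass i * g * len i)) (hat2 qi e3)).

Definition link_equation_omega (i : nat) (qs ws wds : nat -> V3) (Xdd : V2) : Prop :=
  v3add (v3add (hat (qs i) (Mi0 n mass len i Xdd)) (v3scal (Mij n mass len i i) (wds i)))
        (v3opp (sumV3 n (fun j => if (j =? i)%nat then v3zero
                         else v3scal (Mij n mass len i j) (hat (qs i) (hat (qs j) (wds j))))))
  = v3add (sumV3 n (fun j => if (j =? i)%nat then v3zero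
                   else v3scal (Mij n mass len i j * v3norm2 (ws j)) (hat (qs i) (qs j))))
          (v3scal (Mbar n mass i * g * len i) (hat (qs i) e3)).

Definition cart_equation_omega (Xdd : V2) (qs ws wds : nat -> V3) (U : V2) : Prop :=
  v2add (v2scal (M00 n m mass) Xdd)
        (v2scal (-1) (sumV2 n (fun j => M0 n mass len j (hat (qs j) (wds j)))))
  = v2add (sumV2 n (fun j => M0 n mass len j (v3scal (v3norm2 (ws j)) (qs j)))) U.

Lemma link_equation_q_iff (i : nat) (qi qdi : V3) (Xdd : V2) (Qdd : nat -> V3) :
  (1 <= i <= n)%nat -> v3norm2 qi = 1 -> v3dot qi (Qdd i) = - v3norm2 qdi ->
  link_equation_q i qi qdi Xdd Qdd <-> hat qi (link_imbalance i Xdd Qdd) = v3zero.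
Proof.
  intros Hi Hunit Hacc. unfold link_equation_q.
  match goal with |- ?L = ?Rhs <-> _ =>
    assert (E : L = v3add Rhs (v3opp (hat2 qi (link_imbalance i Xdd Qdd)))) end.
  { unfold link_imbalance, link_momentum, gravity_force.
    rewrite !hat2_add, hat2_opp, (sumV3_additive (hat2 qi)) by (apply hat2_add || apply hat2_zero).
    rewrite (sumV3_split_at n i (fun j => hat2 qi (v3scal (Mij n mass len i j) (Qdd j)))) by auto.
    rewrite (sumV3_ext n (fun j => if (j =? i)%nat then v3zero else hat2 qi (v3scal _ (Qdd j)))
               (fun j => if (j =? i)%nat then v3zero else v3scal (Mij n mass len i j) (hat2 qi (Qdd j))))
      by (intros j _; destruct (j =? i)%nat; [reflexivity | apply hat2_scal]).
    rewrite !hat2_scal, (hat2_unit qi (Qdd i)), Hacc by auto.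
    set (S := sumV3 n _). set (A := hat2 qi (Mi0 n mass len i Xdd)). set (G := hat2 qi e3).
    apply V3_ext; vsimpl; ring. }
  rewrite E, v3add_opp_eq_l. apply hat2_eq0_iff; auto.
Qed.

Section RigidRotation.

(* [ws j] and [wds j] stand for the angular velocity and acceleration of link [j], whose
   acceleration is then [Qdd j]. *)
Variables (qs ws wds Qdd : nat -> V3).
Hypothesis Hacc : forall j, (1 <= j <= n)%nat ->
  Qdd j = v3add (v3opp (hat (qs j) (wds j))) (v3scal (- v3norm2 (ws j)) (qs j)).

Lemma link_equation_omega_iff (i : nat) (Xdd : V2) :
  (1 <= i <= n)%nat -> v3norm2 (qs i) = 1 -> v3dot (qs i) (wds i) = 0 ->
  link_equation_omega i qs ws wds Xdd <-> hat (qs i) (link_imbalance i Xdd Qdd) = v3zero.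
Proof.
  intros Hi Hunit Hperp. unfold link_equation_omega.
  match goal with |- ?L = ?Rhs <-> _ =>
    assert (E : L = v3add Rhs (hat (qs i) (link_imbalance i Xdd Qdd))) end.
  { unfold link_imbalance, link_momentum, gravity_force.
    rewrite !hat_add, hat_opp, (sumV3_additive (hat (qs i))) by (apply hat_add || apply hat_zero).
    rewrite (sumV3_split_at n i (fun j => hat (qs i) (v3scal (Mij n mass len i j) (Qdd j)))) by auto.
    set (S1 := sumV3 n (fun j => if (j =? i)%nat then v3zero
                 else v3scal (Mij n mass len i j) (hat (qs i) (hat (qs j) (wds j))))).
    set (S2 := sumV3 n (fun j => if (j =? i)%nat then v3zero
                 else v3scal (Mij n mass len i j * v3norm2 (ws j)) (hat (qs i) (qs j)))).
    assert (ES : sumV3 n (fun j => if (j =? i)%nat then v3zero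
                            else hat (qs i) (v3scal (Mij n mass len i j) (Qdd j)))
                 = v3add (v3opp S1) (v3opp S2)).
    { unfold S1, S2. apply V3_ext; vsimpl; rewrite ?c1_sumV3, ?c2_sumV3, ?c3_sumV3;
        rewrite <- !sumR_opp, <- sumR_add; apply sumR_ext; intros j Hj;
        destruct (j =? i)%nat; vsimpl; try ring;
        rewrite Hacc by auto; unfold hat; vsimpl; ring. }
    rewrite ES, (Hacc i Hi), hat_scal, hat_add, hat_opp, hat_scal.
    assert (E2 : hat (qs i) (hat (qs i) (wds i)) = v3opp (wds i)).
    { change (hat2 (qs i) (wds i) = v3opp (wds i)). rewrite hat2_unit, Hperp by auto.
      apply V3_ext; vsimpl; ring. }
    rewrite E2. set (A := hat (qs i) (Mi0 n mass len i Xdd)).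
    apply V3_ext; unfold hat; vsimpl; ring. }
  rewrite E. apply v3add_eq_l.
Qed.

Lemma cart_equation_omega_iff (Xdd U : V2) :
  cart_equation_omega Xdd qs ws wds U <-> cart_momentum Xdd Qdd = U.
Proof.
  unfold cart_equation_omega, cart_momentum.
  set (A := sumV2 n (fun j => M0 n mass len j (hat (qs j) (wds j)))).
  set (B := sumV2 n (fun j => M0 n mass len j (v3scal (v3norm2 (ws j)) (qs j)))).
  assert (E : sumV2 n (fun j => M0 n mass len j (Qdd j))
              = v2add (v2scal (-1) A) (v2scal (-1) B)).
  { unfold A, B. apply V2_ext; vsimpl; rewrite ?d1_sumV2, ?d2_sumV2, <- !sumR_scal, <- sumR_add;
      apply sumR_ext; intros j Hj; rewrite Hacc by auto; unfold M0, hat; vsimpl; ring. }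
  rewrite E.
  split; intro H; apply V2_ext;
    [apply (f_equal d1) in H | apply (f_equal d2) in H | apply (f_equal d1) in H | apply (f_equal d2) in H];
    vsimpl_all; lra.
Qed.

End RigidRotation.

Section MomentumCalculus.

Variables (X : R -> V2) (Q : nat -> R -> V3) (t : R).

Lemma is_derive_cart_momentum (X' : V2) (Q' : nat -> V3) :
  is_derive_V2 X t X' -> (forall j, (1 <= j <= n)%nat -> is_derive_V3 (Q j) t (Q' j)) ->
  is_derive_V2 (fun s => cart_momentum (X s) (fun j => Q j s)) t (cart_momentum X' Q').
Proof.
  intros HX HQ. unfold cart_momentum.
  apply is_derive_V2_add; [apply is_derive_V2_scal; auto|].
  apply is_derive_V2_sum; intros j Hj. apply is_derive_V2_M0; auto.
Qed.

Lemma is_derive_link_momentum (i : nat) (X' : V2) (Q' : nat -> V3) :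
  is_derive_V2 X t X' -> (forall j, (1 <= j <= n)%nat -> is_derive_V3 (Q j) t (Q' j)) ->
  is_derive_V3 (fun s => link_momentum i (X s) (fun j => Q j s)) t (link_momentum i X' Q').
Proof.
  intros HX HQ. unfold link_momentum.
  apply is_derive_V3_add; [apply is_derive_V3_Mi0; auto|].
  apply is_derive_V3_sum; intros j Hj. apply is_derive_V3_scal; auto.
Qed.

Hypotheses (HX : continuous_V2 X t) (HQ : forall j, (1 <= j <= n)%nat -> continuous_V3 (Q j) t).

Lemma continuous_cart_momentum :
  continuous_V2 (fun s => cart_momentum (X s) (fun j => Q j s)) t.
Proof.
  unfold cart_momentum. apply continuous_V2_add; [apply continuous_V2_scal; auto|].
  apply continuous_V2_sum; intros j Hj. apply continuous_V2_M0; auto.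
Qed.

Lemma continuous_link_momentum (i : nat) :
  continuous_V3 (fun s => link_momentum i (X s) (fun j => Q j s)) t.
Proof.
  unfold link_momentum. apply continuous_V3_add; [apply continuous_V3_Mi0; auto|].
  apply continuous_V3_sum; intros j Hj. apply continuous_V3_scal; auto.
Qed.

End MomentumCalculus.

Definition variation_integrand (x : R -> V2) (q : nat -> R -> V3) (u dx : R -> V2)
    (xi : nat -> R -> V3) (t : R) : R :=
  Derive (fun e => Lag n m mass len g (v2add (dV2 x t) (v2scal e (dV2 dx t)))
      (fun i => v3add (q i t) (v3scal e (v3cross (xi i t) (q i t))))
      (fun i => v3add (dV3 (q i) t) (v3scal e (dV3 (fun s => v3cross (xi i s) (q i s)) t)))) 0
  + v2dot (u t) (dx t).

Definition variation_residual (x : R -> V2) (q : nat -> R -> V3) (u dx : R -> V2)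
    (xi : nat -> R -> V3) (t : R) : R :=
  v2dot (u t) (dx t)
  - v2dot (cart_momentum (dV2 (dV2 x) t) (fun j => dV3 (dV3 (q j)) t)) (dx t)
  - sumR n (fun i => v3dot (link_imbalance i (dV2 (dV2 x) t) (fun j => dV3 (dV3 (q j)) t))
                           (v3cross (xi i t) (q i t))).

Definition boundary_term (x : R -> V2) (q : nat -> R -> V3) (dx : R -> V2)
    (xi : nat -> R -> V3) (t : R) : R :=
  v2dot (cart_momentum (dV2 x t) (fun j => dV3 (q j) t)) (dx t)
  + sumR n (fun i => v3dot (link_momentum i (dV2 x t) (fun j => dV3 (q j) t))
                           (v3cross (xi i t) (q i t))).

Definition boundary_term_derivative (x : R -> V2) (q : nat -> R -> V3) (dx : R -> V2)
    (xi : nat -> R -> V3) (t : R) : R :=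
  v2dot (cart_momentum (dV2 (dV2 x) t) (fun j => dV3 (dV3 (q j)) t)) (dx t)
  + v2dot (cart_momentum (dV2 x t) (fun j => dV3 (q j) t)) (dV2 dx t)
  + sumR n (fun i =>
      v3dot (link_momentum i (dV2 (dV2 x) t) (fun j => dV3 (dV3 (q j)) t)) (v3cross (xi i t) (q i t))
      + v3dot (link_momentum i (dV2 x t) (fun j => dV3 (q j) t))
              (dV3 (fun s => v3cross (xi i s) (q i s)) t)).

Lemma variation_integrand_split (x : R -> V2) (q : nat -> R -> V3) (u dx : R -> V2)
    (xi : nat -> R -> V3) (t : R) :
  variation_integrand x q u dx xi t
  = boundary_term_derivative x q dx xi t + variation_residual x q u dx xi t.
Proof.
  unfold variation_integrand. erewrite is_derive_unique; [|apply Lag_first_variation].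
  unfold boundary_term_derivative, variation_residual, link_imbalance.
  rewrite (sumR_ext n (fun i => v3dot (v3add _ (v3opp _)) _)
    (fun i => v3dot (link_momentum i (dV2 (dV2 x) t) (fun j => dV3 (dV3 (q j)) t)) (v3cross (xi i t) (q i t))
              + - v3dot (gravity_force i) (v3cross (xi i t) (q i t))))
    by (intros; unfold v3dot; vsimpl; ring).
  rewrite !sumR_add, sumR_opp.
  ring.
Qed.

Section Trajectory.

Variables (x : R -> V2) (q : nat -> R -> V3) (u : R -> V2).
Hypotheses (Hx : C2_V2 x) (Hq : forall i, (1 <= i <= n)%nat -> C2_V3 (q i)) (Hu : cont_V2 u)
  (Hunit : forall i t, (1 <= i <= n)%nat -> v3norm2 (q i t) = 1).

Lemma continuous_cart_momentum_rate (t : R) :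
  continuous_V2 (fun s => cart_momentum (dV2 (dV2 x) s) (fun j => dV3 (dV3 (q j)) s)) t.
Proof.
  apply continuous_cart_momentum; [apply C1_V2_continuous_dV2, (C2_V2_C1 x Hx)|].
  intros j Hj; apply C1_V3_continuous_dV3, (C2_V3_C1 _ (Hq j Hj)).
Qed.

Lemma continuous_link_imbalance (i : nat) (t : R) :
  continuous_V3 (fun s => link_imbalance i (dV2 (dV2 x) s) (fun j => dV3 (dV3 (q j)) s)) t.
Proof.
  unfold link_imbalance. apply continuous_V3_add; [|apply continuous_V3_const].
  apply continuous_link_momentum; [apply C1_V2_continuous_dV2, (C2_V2_C1 x Hx)|].
  intros j Hj; apply C1_V3_continuous_dV3, (C2_V3_C1 _ (Hq j Hj)).
Qed.

Section AdmissibleVariation.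

Variables (dx : R -> V2) (xi : nat -> R -> V3).
Hypotheses (Hdx : C1_V2 dx) (Hxi : forall i, (1 <= i <= n)%nat -> C1_V3 (xi i)).

Lemma C1_V3_link_variation (i : nat) : (1 <= i <= n)%nat ->
  C1_V3 (fun s => v3cross (xi i s) (q i s)).
Proof. intros Hi. apply C1_V3_cross; [auto | apply (C2_V3_C1 _ (Hq i Hi))]. Qed.

Lemma is_derive_boundary_term (t : R) :
  is_derive (boundary_term x q dx xi) t (boundary_term_derivative x q dx xi t).
Proof.
  destruct (C2_V2_C1 x Hx) as [Hx1 Hx2].
  unfold boundary_term, boundary_term_derivative. apply is_derive_Rplus.
  - apply is_derive_v2dot; [|apply C1_V2_is_derive; auto].
    apply is_derive_cart_momentum; [apply C1_V2_is_derive; auto|].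
    intros j Hj; apply C1_V3_is_derive, (C2_V3_C1 _ (Hq j Hj)).
  - apply is_derive_sumR; intros i Hi.
    apply is_derive_v3dot; [|apply C1_V3_is_derive, C1_V3_link_variation; auto].
    apply is_derive_link_momentum; [apply C1_V2_is_derive; auto|].
    intros j Hj; apply C1_V3_is_derive, (C2_V3_C1 _ (Hq j Hj)).
Qed.

Lemma continuous_boundary_term_derivative (t : R) :
  continuous (boundary_term_derivative x q dx xi) t.
Proof.
  destruct (C2_V2_C1 x Hx) as [Hx1 Hx2].
  assert (Hv : forall j, (1 <= j <= n)%nat -> continuous_V3 (dV3 (q j)) t)
    by (intros j Hj; apply C1_V3_continuous_dV3, (C2_V3_C1 _ (Hq j Hj))).
  assert (Ha : forall j, (1 <= j <= n)%nat -> continuous_V3 (dV3 (dV3 (q j))) t)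
    by (intros j Hj; apply C1_V3_continuous_dV3, (C2_V3_C1 _ (Hq j Hj))).
  unfold boundary_term_derivative.
  apply continuous_Rplus; [apply continuous_Rplus|].
  - apply continuous_v2dot; [|apply C1_V2_continuous; auto].
    apply continuous_cart_momentum; [apply C1_V2_continuous_dV2|]; auto.
  - apply continuous_v2dot; [|apply C1_V2_continuous_dV2; auto].
    apply continuous_cart_momentum; [apply C1_V2_continuous_dV2|]; auto.
  - apply continuous_sumR; intros i Hi. apply continuous_Rplus.
    + apply continuous_v3dot; [|apply C1_V3_continuous, C1_V3_link_variation; auto].
      apply continuous_link_momentum; [apply C1_V2_continuous_dV2|]; auto.
    + apply continuous_v3dot; [|apply C1_V3_continuous_dV3, C1_V3_link_variation; auto].
      apply continuous_link_momentum; [apply C1_V2_continuous_dV2|]; auto.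
Qed.

Lemma continuous_variation_residual (t : R) : continuous (variation_residual x q u dx xi) t.
Proof.
  assert (Hdxt : continuous_V2 dx t) by (apply C1_V2_continuous; auto).
  unfold variation_residual.
  apply continuous_Rminus; [apply continuous_Rminus|].
  - apply continuous_v2dot; [split; apply Hu | auto].
  - apply continuous_v2dot; [apply continuous_cart_momentum_rate | auto].
  - apply continuous_sumR; intros i Hi.
    apply continuous_v3dot; [apply continuous_link_imbalance|].
    apply C1_V3_continuous, C1_V3_link_variation; auto.
Qed.

(* Integration by parts: the momentum terms integrate to the boundary term, which vanishes. *)
Lemma RInt_variation_integrand (a b : R) :
  dx a = v2zero -> dx b = v2zero ->
  (forall i, (1 <= i <= n)%nat -> xi i a = v3zero /\ xi i b = v3zero) ->
  RInt (variation_integrand x q u dx xi) a b = RInt (variation_residual x q u dx xi) a b.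
Proof.
  intros Ha Hb Hab.
  assert (Hvanish : forall s, dx s = v2zero -> (forall i, (1 <= i <= n)%nat -> xi i s = v3zero) ->
                      boundary_term x q dx xi s = 0).
  { intros s Hs Hxs. unfold boundary_term. rewrite Hs.
    rewrite (sumR_ext n _ (fun _ => 0)) by (intros i Hi; rewrite Hxs by auto; unfold v3dot; vsimpl; ring).
    rewrite sumR_zero. unfold v2dot; vsimpl; ring. }
  assert (Hbd : is_RInt (boundary_term_derivative x q dx xi) a b
                  (minus (boundary_term x q dx xi b) (boundary_term x q dx xi a))).
  { apply (@is_RInt_derive R_CompleteNormedModule); intros;
      [apply is_derive_boundary_term | apply continuous_boundary_term_derivative]. }
  rewrite !Hvanish, minus_eq_zero in Hbd; auto; try (intros; apply Hab; auto).
  rewrite (RInt_ext _ (fun t => plus (boundary_term_derivative x q dx xi t)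
                                     (variation_residual x q u dx xi t)))
    by (intros; apply variation_integrand_split).
  apply is_RInt_unique.
  rewrite <- (plus_zero_l (RInt (variation_residual x q u dx xi) a b)).
  apply (is_RInt_plus (boundary_term_derivative x q dx xi)); [exact Hbd|].
  apply (@RInt_correct R_CompleteNormedModule), (@ex_RInt_continuous R_CompleteNormedModule).
  intros; apply continuous_variation_residual.
Qed.

End AdmissibleVariation.

Definition admissible_variation (a b : R) (dx : R -> V2) (xi : nat -> R -> V3) : Prop :=
  C1_V2 dx /\ (forall i, (1 <= i <= n)%nat -> C1_V3 (xi i)) /\
  (forall i t, (1 <= i <= n)%nat -> v3dot (xi i t) (q i t) = 0) /\
  dx a = v2zero /\ dx b = v2zero /\
  (forall i, (1 <= i <= n)%nat -> xi i a = v3zero /\ xi i b = v3zero).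

Lemma LdA_iff_residual :
  LdA n m mass len g x q u <->
  forall a b, a < b -> forall (dx : R -> V2) (xi : nat -> R -> V3),
    admissible_variation a b dx xi -> RInt (variation_residual x q u dx xi) a b = 0.
Proof.
  split.
  - intros H a b Hab dx xi (Hdx & Hxi & Hperp & Ha & Hb & Hends).
    specialize (H a b Hab dx xi Hdx Hxi Hperp Ha Hb Hends).
    change (RInt (variation_integrand x q u dx xi) a b = 0) in H.
    rewrite <- H; symmetry; apply RInt_variation_integrand; auto.
  - intros H a b Hab dx xi Hdx Hxi Hperp Ha Hb Hends.
    change (RInt (variation_integrand x q u dx xi) a b = 0).
    rewrite RInt_variation_integrand by auto.
    apply H; [exact Hab | repeat (split; [assumption|]); assumption].
Qed.

Definition momentum_balance : Prop :=
  forall t, cart_momentum (dV2 (dV2 x) t) (fun j => dV3 (dV3 (q j)) t) = u t /\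
    forall i, (1 <= i <= n)%nat ->
      hat (q i t) (link_imbalance i (dV2 (dV2 x) t) (fun j => dV3 (dV3 (q j)) t)) = v3zero.

Lemma residual_zero_of_momentum_balance (dx : R -> V2) (xi : nat -> R -> V3) (t : R) :
  momentum_balance -> variation_residual x q u dx xi t = 0.
Proof.
  intros Hbal. destruct (Hbal t) as [Hcart Hlink]. unfold variation_residual.
  rewrite Hcart, (sumR_ext n _ (fun _ => 0)), sumR_zero; [ring|].
  intros i Hi. rewrite v3dot_cross, Hlink by auto. unfold v3dot; vsimpl; ring.
Qed.

Section Tests.

Hypothesis Hres : forall a b, a < b -> forall (dx : R -> V2) (xi : nat -> R -> V3),
  admissible_variation a b dx xi -> RInt (variation_residual x q u dx xi) a b = 0.

Lemma cart_balance_of_residual (t : R) :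
  cart_momentum (dV2 (dV2 x) t) (fun j => dV3 (dV3 (q j)) t) = u t.
Proof.
  set (P := fun s => cart_momentum (dV2 (dV2 x) s) (fun j => dV3 (dV3 (q j)) s)).
  assert (Hw : forall w : V2, v2dot (u t) w - v2dot (P t) w = 0).
  { intro w. apply (bump_orthogonal_eq0 (fun s => v2dot (u s) w - v2dot (P s) w)).
    - intro s. apply continuous_Rminus; apply continuous_v2dot;
        solve [split; apply Hu | apply continuous_cart_momentum_rate
              | split; apply continuous_const].
    - intros a b Hab.
      assert (Hpt : forall s, variation_residual x q u (fun s => v2scal (bump a b s) w)
                                (fun _ _ => v3zero) s
                              = bump a b s * (v2dot (u s) w - v2dot (P s) w)).
      { intro s. unfold variation_residual.
        rewrite (sumR_ext n _ (fun _ => 0)) by (intros; unfold v3dot; vsimpl; ring).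
        rewrite sumR_zero. unfold P, v2dot; vsimpl; ring. }
      rewrite <- (Hres a b Hab (fun s => v2scal (bump a b s) w) (fun _ _ => v3zero)).
      + apply RInt_ext; intros; symmetry; apply Hpt.
      + split; [apply C1_V2_scal, bump_C1|]. split; [intros; apply C1_V3_const|].
        split; [intros; unfold v3dot; vsimpl; ring|].
        split; [rewrite bump_l; apply V2_ext; vsimpl; ring|].
        split; [rewrite bump_r; apply V2_ext; vsimpl; ring | split; reflexivity]. }
  pose proof (Hw (mkV2 1 0)) as E1. pose proof (Hw (mkV2 0 1)) as E2.
  change (P t = u t). unfold v2dot in E1, E2; vsimpl_all. apply V2_ext; lra.
Qed.

(* Tested against [xi_i = bump * (q_i x w)], admissible because it is orthogonal to [q_i]. *)
Lemma link_balance_of_residual (i : nat) (t : R) : (1 <= i <= n)%nat ->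
  hat (q i t) (link_imbalance i (dV2 (dV2 x) t) (fun j => dV3 (dV3 (q j)) t)) = v3zero.
Proof.
  intros Hi.
  set (P := fun s => link_imbalance i (dV2 (dV2 x) s) (fun j => dV3 (dV3 (q j)) s)).
  assert (Hq1 : C1_V3 (q i)) by apply (C2_V3_C1 _ (Hq i Hi)).
  assert (Hw : forall w : V3, v3dot w (hat2 (q i t) (P t)) = 0).
  { intro w. apply (bump_orthogonal_eq0 (fun s => v3dot w (hat2 (q i s) (P s)))).
    - intro s. apply continuous_v3dot; [apply continuous_V3_const|].
      unfold hat2, hat. apply continuous_V3_cross; [apply C1_V3_continuous; auto|].
      apply continuous_V3_cross; [apply C1_V3_continuous; auto | apply continuous_link_imbalance].
    - intros a b Hab.
      set (xi := fun j s => if (j =? i)%nat then v3scal (bump a b s) (v3cross (q i s) w) else v3zero).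
      assert (Hpt : forall s, variation_residual x q u (fun _ => v2zero) xi s
                              = bump a b s * v3dot w (hat2 (q i s) (P s))).
      { intro s. unfold variation_residual.
        rewrite (sumR_only n i) by (auto; intros j Hj; unfold xi;
          apply Nat.eqb_neq in Hj; rewrite Hj; unfold v3dot; vsimpl; ring).
        unfold xi. rewrite Nat.eqb_refl. fold (P s). set (Ps := P s).
        unfold v2dot, v3dot, hat2, hat; vsimpl; ring. }
      rewrite <- (Hres a b Hab (fun _ => v2zero) xi).
      + apply RInt_ext; intros; symmetry; apply Hpt.
      + split; [apply C1_V2_const|].
        split.
        { intros j Hj. unfold xi. destruct (j =? i)%nat; [|apply C1_V3_const].
          apply C1_V3_scal; [apply bump_C1 | apply C1_V3_cross; auto using C1_V3_const]. }
        split.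
        { intros j s Hj. unfold xi. destruct (Nat.eqb_spec j i) as [->|];
            unfold v3dot; vsimpl; ring. }
        split; [reflexivity|]. split; [reflexivity|].
        intros j Hj. unfold xi. destruct (j =? i)%nat; [rewrite bump_l, bump_r|];
          split; try reflexivity; apply V3_ext; vsimpl; ring. }
  apply hat2_eq0_iff; [apply Hunit; auto|]. fold (P t).
  pose proof (Hw (mkV3 1 0 0)) as E1. pose proof (Hw (mkV3 0 1 0)) as E2.
  pose proof (Hw (mkV3 0 0 1)) as E3.
  unfold v3dot in E1, E2, E3; vsimpl_all. apply V3_ext; vsimpl; lra.
Qed.

End Tests.

Lemma LdA_iff_momentum_balance : LdA n m mass len g x q u <-> momentum_balance.
Proof.
  rewrite LdA_iff_residual. split.
  - intros Hres t. split; [apply cart_balance_of_residual | intros; apply link_balance_of_residual]; auto.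
  - intros Hbal a b _ dx xi _.
    rewrite (RInt_ext _ (fun _ => 0)) by (intros; apply residual_zero_of_momentum_balance; auto).
    rewrite RInt_const. unfold scal; simpl. unfold mult; simpl. ring.
Qed.

Lemma EL_q_iff_momentum_balance : EL_q n m mass len g x q u <-> momentum_balance.
Proof.
  assert (Hlink : forall t i, (1 <= i <= n)%nat ->
            link_equation_q i (q i t) (dV3 (q i) t) (dV2 (dV2 x) t) (fun j => dV3 (dV3 (q j)) t)
            <-> hat (q i t) (link_imbalance i (dV2 (dV2 x) t) (fun j => dV3 (dV3 (q j)) t))
                = v3zero).
  { intros t i Hi. apply link_equation_q_iff; auto.
    apply unit_dot_acceleration; auto. }
  split; intros H t; destruct (H t) as [Hcart Hl]; split; auto; intros i Hi;
    [apply (proj1 (Hlink t i Hi)) | apply (proj2 (Hlink t i Hi))]; apply Hl; auto.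
Qed.

Lemma EL_omega_iff_momentum_balance (om : nat -> R -> V3) :
  (forall i, (1 <= i <= n)%nat -> C1_V3 (om i)) ->
  (forall i t, (1 <= i <= n)%nat ->
     dV3 (q i) t = v3cross (om i t) (q i t) /\ v3dot (om i t) (q i t) = 0) ->
  EL_omega n m mass len g x q om u <-> momentum_balance.
Proof.
  intros Hom Hrot.
  assert (Hacc : forall t j, (1 <= j <= n)%nat ->
            dV3 (dV3 (q j)) t = v3add (v3opp (hat (q j t) (dV3 (om j) t)))
                                      (v3scal (- v3norm2 (om j t)) (q j t)))
    by (intros t j Hj; apply acceleration_of_angular_velocity; auto).
  assert (Hcart : forall t,
            cart_equation_omega (dV2 (dV2 x) t) (fun j => q j t) (fun j => om j t)
              (fun j => dV3 (om j) t) (u t)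
            <-> cart_momentum (dV2 (dV2 x) t) (fun j => dV3 (dV3 (q j)) t) = u t)
    by (intro t; apply cart_equation_omega_iff; auto).
  assert (Hlink : forall t i, (1 <= i <= n)%nat ->
            link_equation_omega i (fun j => q j t) (fun j => om j t) (fun j => dV3 (om j) t)
              (dV2 (dV2 x) t)
            <-> hat (q i t) (link_imbalance i (dV2 (dV2 x) t) (fun j => dV3 (dV3 (q j)) t))
                = v3zero).
  { intros t i Hi. apply link_equation_omega_iff; auto.
    apply unit_dot_angular_acceleration with (w := om i); auto. }
  split; intros H t; destruct (H t) as [Hc Hl]; split;
    [apply (proj1 (Hcart t)), Hc | | apply (proj2 (Hcart t)), Hc |]; intros i Hi;
    [apply (proj1 (Hlink t i Hi)) | apply (proj2 (Hlink t i Hi))]; apply Hl; auto.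
Qed.

End Trajectory.
End Chain.

Theorem proposition1
  (n : nat) (m : R) (mass len : nat -> R) (g : R)
  (Hn : (1 <= n)%nat) (Hm : 0 < m) (Hg : 0 < g)
  (Hmass : forall i, (1 <= i <= n)%nat -> 0 < mass i)
  (Hlen : forall i, (1 <= i <= n)%nat -> 0 < len i)
  (x : R -> V2) (q : nat -> R -> V3) (u : R -> V2)
  (Hx : C2_V2 x)
  (Hq : forall i, (1 <= i <= n)%nat -> C2_V3 (q i))
  (HqS2 : forall i t, (1 <= i <= n)%nat -> v3norm2 (q i t) = 1)
  (Hu : cont_V2 u) :
  (LdA n m mass len g x q u <-> EL_q n m mass len g x q u) /\
  (forall om : nat -> R -> V3,
     (forall i, (1 <= i <= n)%nat -> C1_V3 (om i)) ->
     (forall i t, (1 <= i <= n)%nat ->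
        dV3 (q i) t = v3cross (om i t) (q i t) /\ v3dot (om i t) (q i t) = 0) ->
     (EL_q n m mass len g x q u <-> EL_omega n m mass len g x q om u)).
Proof.
  split.
  - rewrite LdA_iff_momentum_balance, EL_q_iff_momentum_balance by auto. reflexivity.
  - intros om Hom Hrot.
    rewrite EL_q_iff_momentum_balance, EL_omega_iff_momentum_balance by auto. reflexivity.
Qed.
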